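(* Let $\mathbb{O}(P)$ be the limit of order ideals associated with an inverse system $\langle\{P_n\},\{p^n_k\}_{k<n}\rangle$ of nonempty finite posets with quotient maps. Then $\mathbb{O}(P)$ is $\sigma$-complete: every countable subset of $\mathbb{O}(P)$ has a supremum and an infimum in $\mathbb{O}(P)$.
   Context: A quotient map between posets is a surjective order-preserving map $\phi:A\to B$ such that for all $a\le b$ in $B$ there are $x\le y$ in $A$ with $\phi(x)=a,\phi(y)=b$. The inverse system: nonempty finite posets $P_n$, quotient maps $p^m_k:P_m\to P_k$ ($k<m$) with $p^k_l\circ p^m_k=p^m_l$. $\mathcal{O}(P_n)$ is the set of down-sets of $P_n$ under inclusion; for a quotient map $p:Q\to R$ of finite posets, $\hat p(\emptyset)=\emptyset$ and $\hat p(A)=\bigcup_i\downarrow p(a_i)$ over the maximal elements $a_i$ of $A$, where $\downarrow x=\{m:m\le x\}$. $\mathbb{O}(P):=\{(A_n)\in\prod_n\mathcal{O}(P_n):\widehat{p^{n+1}_n}(A_{n+1})=A_n\ \forall n\}$, ordered coordinatewise by inclusion. *)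

From mathcomp Require Import all_boot all_order.
Set Implicit Arguments. Unset Strict Implicit. Unset Printing Implicit Defensive.
Import Order.TTheory.
Local Open Scope order_scope.

Section Posets.
Variables (d : Order.disp_t).

Definition quotient_map (Q R : finPOrderType d) (phi : Q -> R) : Prop :=
  [/\ (forall x y : Q, x <= y -> phi x <= phi y),
      (forall b : R, exists x : Q, phi x = b) &
      (forall a b : R, a <= b -> exists x y : Q, [/\ x <= y, phi x = a & phi y = b])].

Definition downset (Q : finPOrderType d) (A : {set Q}) : Prop :=
  forall x y : Q, y \in A -> x <= y -> x \in A.

Definition downarrow (Q : finPOrderType d) (x : Q) : {set Q} := [set m | m <= x].

Definition maximal_in (Q : finPOrderType d) (A : {set Q}) (a : Q) : bool :=
  (a \in A) && [forall b in A, (a <= b) ==> (b == a)].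

Definition hat (Q R : finPOrderType d) (p : Q -> R) (A : {set Q}) : {set R} :=
  \bigcup_(a in [set a | maximal_in A a]) downarrow (p a).
End Posets.

Definition inverse_system d (P : nat -> finPOrderType d)
  (p : forall m k : nat, P m -> P k) : Prop :=
  [/\ (forall n, exists x : P n, True),
      (forall m k, (k < m)%N -> quotient_map (p m k)) &
      (forall m k l, (l < k)%N -> (k < m)%N -> forall x, p k l (p m k x) = p m l x)].

Definition inOP d (P : nat -> finPOrderType d) (p : forall m k : nat, P m -> P k)
  (A : forall n, {set P n}) : Prop :=
  (forall n, downset (A n)) /\ (forall n, hat (p n.+1 n) (A n.+1) = A n).

Definition leOP d (P : nat -> finPOrderType d) (A B : forall n, {set P n}) : Prop :=
  forall n, A n \subset B n.

Definition countable_family d (P : nat -> finPOrderType d)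
  (S : (forall n, {set P n}) -> Prop) : Prop :=
  exists f : nat -> (forall n, {set P n}), forall A, S A -> exists i, f i = A.

Definition is_sup_OP d (P : nat -> finPOrderType d) (p : forall m k : nat, P m -> P k)
  (S : (forall n, {set P n}) -> Prop) (U : forall n, {set P n}) : Prop :=
  [/\ inOP p U, (forall A, S A -> leOP A U) &
      (forall V, inOP p V -> (forall A, S A -> leOP A V) -> leOP U V)].

Definition is_inf_OP d (P : nat -> finPOrderType d) (p : forall m k : nat, P m -> P k)
  (S : (forall n, {set P n}) -> Prop) (L : forall n, {set P n}) : Prop :=
  [/\ inOP p L, (forall A, S A -> leOP L A) &
      (forall V, inOP p V -> (forall A, S A -> leOP V A) -> leOP V L)].

From mathcomp Require Import all_boot all_order boolp zify.
Set Implicit Arguments. Unset Strict Implicit. Unset Printing Implicit Defensive.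
Import Order.TTheory.
Local Open Scope order_scope.

(* For a monotone map f between finite posets, [hat f X] is the down-closure of
   f(X); hence the coordinatewise union of a family of elements of O(P) is again
   in O(P) and is its supremum.  The coordinatewise intersection I of the family
   is not in O(P) in general, but its projections map I_(n+1) into I_n.  The
   infimum is the largest element of O(P) below I: at level n it consists of the
   points lying below a projection of some point of I_M, for every M > n.  Since
   the P_n are finite, the nested sets of candidate lifts of such a point
   stabilize, so a single lift works at all levels; this gives hat(L_(n+1)) = L_n. *)

Section Hat.
Variable d : Order.disp_t.

Lemma maximal_in_above (Q : finPOrderType d) (A : {set Q}) (a : Q) :
  a \in A -> exists2 b, maximal_in A b & a <= b.
Proof.
(* Above a, take b in A whose principal down-set is as large as possible. *)
move=> aA; have aB : (a \in A) && (a <= a) by rewrite aA lexx.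
have [b /andP[bA ab] bmax] :=
  @arg_maxnP _ a (fun b => (b \in A) && (a <= b)) (fun b => #|downarrow b|) aB.
exists b => //.
rewrite /maximal_in bA; apply/forall_inP => c cA; apply/implyP => bc.
apply: contraT => ncb.
have : (#|downarrow b| < #|downarrow c|)%N.
  apply: proper_card; apply/properP; split.
    by apply/subsetP => x; rewrite !inE => /le_trans; apply.
  exists c; rewrite !inE //.
  by apply: contra ncb => cb; rewrite eq_le cb bc.
have c_cand : (c \in A) && (a <= c) by rewrite cA (le_trans ab bc).
by move/(leq_ltn_trans (bmax c c_cand)); rewrite ltnn.
Qed.

Lemma hatE (Q R : finPOrderType d) (f : Q -> R) :
  {homo f : x y / x <= y} ->
  forall X, hat f X = [set y | [exists a in X, y <= f a]].
Proof.
move=> f_mono X; apply/setP => y; rewrite inE; apply/bigcupP/exists_inP.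
  by move=> [a]; rewrite inE => /andP[aX _]; rewrite inE; exists a.
move=> [a aX ya]; have [b mb ab] := maximal_in_above aX.
by exists b; rewrite inE //; apply: le_trans ya (f_mono _ _ ab).
Qed.

End Hat.

Lemma nonincreasing_sets_min (T : finType) (F : nat -> {set T}) :
  (forall j, F j.+1 \subset F j) -> exists J, forall j, F J \subset F j.
Proof.
move=> F_dec.
have F_anti : {homo F : i j / (i <= j)%N >-> j \subset i}.
  apply: homo_leq => [A|B A C AB BC|//]; first exact: subxx.
  exact: subset_trans BC AB.
have cardP : exists k, `[< exists j, #|F j| = k >] by exists #|F 0|; apply/asboolP; exists 0.
case: (ex_minnP cardP) => k /asboolP[J <-] Jmin; exists J => j.
case: (leqP J j) => [Jj | /ltnW jJ]; last exact: F_anti.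
have Fj_min : (#|F J| <= #|F j|)%N by apply: Jmin; apply/asboolP; exists j.
by have /eqP -> : F j == F J by rewrite eqEcard F_anti.
Qed.

Section Limit.
Variables (d : Order.disp_t) (P : nat -> finPOrderType d) (p : forall m k : nat, P m -> P k).
Arguments p : clear implicits.
Hypothesis p_mono : forall m k, (k < m)%N -> forall x y : P m, x <= y -> p m k x <= p m k y.
Hypothesis p_comp :
  forall m k l, (l < k)%N -> (k < m)%N -> forall x, p k l (p m k x) = p m l x.

Lemma hat_bondE n X : hat (p n.+1 n) X = [set y | [exists a in X, y <= p n.+1 n a]].
Proof. exact/hatE/p_mono. Qed.

Lemma inOP_bondP {A n y} :
  inOP p A -> reflect (exists2 a, a \in A n.+1 & y <= p n.+1 n a) (y \in A n).
Proof. by case=> _ A_hat; rewrite -(A_hat n) hat_bondE inE; apply: exists_inP. Qed.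

Definition proj_down (B : forall n, {set P n}) M n :=
  [set x : P n | [exists z in B M, x <= p M n z]].

Definition liftable (B : forall n, {set P n}) n :=
  [set x : P n | `[< forall M, (n < M)%N -> x \in proj_down B M n >]].

Lemma inOP_sub_proj_down A n M :
  inOP p A -> (n < M)%N -> A n \subset proj_down A M n.
Proof.
move=> A_OP; elim: M => // M IH; rewrite ltnS leq_eqVlt => /predU1P[<- | nM].
  apply/subsetP => x /(inOP_bondP A_OP)[a aA xa].
  by rewrite inE; apply/exists_inP; exists a.
apply/subsetP => x /(subsetP (IH nM)); rewrite inE => /exists_inP[z zA xz].
have [w wA zw] := inOP_bondP A_OP zA.
rewrite inE; apply/exists_inP; exists w => //.
by rewrite -(p_comp nM (ltnSn M)); apply: le_trans xz (p_mono nM zw).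
Qed.

Lemma proj_down_bond B M n a y :
  (n.+1 < M)%N -> a \in proj_down B M n.+1 -> y <= p n.+1 n a ->
  y \in proj_down B M n.
Proof.
move=> nM; rewrite !inE => /exists_inP[z zB az] ya; apply/exists_inP; exists z => //.
by rewrite -(p_comp (ltnSn n) nM); apply: le_trans ya (p_mono (ltnSn n) az).
Qed.

Section Liftable.
Variable B : forall n, {set P n}.
Hypothesis B_down : forall n, downset (B n).
Hypothesis B_bond : forall n x, x \in B n.+1 -> p n.+1 n x \in B n.

Lemma proj_down_succ M n : (n < M)%N -> proj_down B M.+1 n \subset proj_down B M n.
Proof.
move=> nM; apply/subsetP => x; rewrite !inE => /exists_inP[z zB xz].
by apply/exists_inP; exists (p M.+1 M z); [exact: B_bond | rewrite p_comp].
Qed.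

Lemma liftable_downset n : downset (liftable B n).
Proof.
move=> x y; rewrite !inE => /asboolP y_lift xy; apply/asboolP => M nM.
move: (y_lift M nM); rewrite !inE => /exists_inP[z zB yz].
by apply/exists_inP; exists z => //; apply: le_trans xy yz.
Qed.

Lemma hat_liftable n : hat (p n.+1 n) (liftable B n.+1) = liftable B n.
Proof.
apply/setP => y; rewrite hat_bondE inE; apply/exists_inP/idP.
  move=> [a]; rewrite inE => /asboolP a_lift ya; rewrite inE; apply/asboolP => M nM.
  apply: (subsetP (proj_down_succ nM)).
  by apply: proj_down_bond ya; [|apply: a_lift].
rewrite inE => /asboolP y_lift.
pose G j := [set a in proj_down B (n.+2 + j) n.+1 | y <= p n.+1 n a].
have [J GJ_min] : exists J, forall j, G J \subset G j.
  apply: nonincreasing_sets_min => j; apply/subsetP => a.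
  rewrite /G [a \in _]inE addnS => /andP[a_down ya].
  by rewrite inE ya andbT (subsetP (proj_down_succ _) _ a_down) //; lia.
have := y_lift (n.+2 + J); rewrite inE => /(_ ltac:(lia)) /exists_inP[z zB yz].
exists (p (n.+2 + J) n.+1 z); last by rewrite p_comp //; lia.
rewrite inE; apply/asboolP => M nM.
have: p (n.+2 + J) n.+1 z \in G J.
  rewrite !inE p_comp //; last by lia.
  by rewrite yz andbT; apply/exists_inP; exists z.
by move/(subsetP (GJ_min (M - n.+2))); rewrite inE subnKC // => /andP[].
Qed.

Lemma liftable_inOP : inOP p (liftable B).
Proof. by split; [exact: liftable_downset | exact: hat_liftable]. Qed.

Lemma liftable_sub n : liftable B n \subset B n.
Proof.
apply/subsetP => x; rewrite inE => /asboolP /(_ n.+1 (ltnSn n)).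
by rewrite inE => /exists_inP[z zB xz]; apply: B_down (B_bond zB) xz.
Qed.

Lemma liftable_greatest V : inOP p V -> leOP V B -> leOP V (liftable B).
Proof.
move=> V_OP VB n; apply/subsetP => x xV; rewrite inE; apply/asboolP => M nM.
move: (subsetP (inOP_sub_proj_down V_OP nM) x xV); rewrite !inE.
by move=> /exists_inP[z zV xz]; apply/exists_inP; exists z => //; apply: (subsetP (VB M)).
Qed.

End Liftable.

Section Family.
Variable S : (forall n, {set P n}) -> Prop.
Hypothesis S_OP : forall A, S A -> inOP p A.

Definition fam_cup n := [set x : P n | `[< exists2 A, S A & x \in A n >]].

Definition fam_cap n := [set x : P n | `[< forall A, S A -> x \in A n >]].

Lemma fam_cup_sup : is_sup_OP p S fam_cup.
Proof.
split.
- split=> n.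
    move=> x y; rewrite !inE => /asboolP[A SA yA] xy.
    by apply/asboolP; exists A => //; apply: (S_OP SA).1 yA xy.
  apply/setP => y; rewrite hat_bondE !inE; apply/exists_inP/asboolP.
    move=> [a]; rewrite inE => /asboolP[A SA aA] ya.
    by exists A => //; apply/(inOP_bondP (S_OP SA)); exists a.
  move=> [A SA /(inOP_bondP (S_OP SA))[a aA ya]].
  by exists a => //; rewrite inE; apply/asboolP; exists A.
- move=> A SA n; apply/subsetP => x xA.
  by rewrite inE; apply/asboolP; exists A.
- move=> V _ SV n; apply/subsetP => x; rewrite inE => /asboolP[A SA xA].
  exact: (subsetP (SV A SA n)).
Qed.

Lemma fam_cap_downset n : downset (fam_cap n).
Proof.
move=> x y; rewrite !inE => /asboolP y_cap xy; apply/asboolP => A SA.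
exact: (S_OP SA).1 (y_cap A SA) xy.
Qed.

Lemma fam_cap_bond n x : x \in fam_cap n.+1 -> p n.+1 n x \in fam_cap n.
Proof.
rewrite !inE => /asboolP x_cap; apply/asboolP => A SA.
by apply/(inOP_bondP (S_OP SA)); exists x; [apply: x_cap|].
Qed.

Lemma liftable_fam_cap_inf : is_inf_OP p S (liftable fam_cap).
Proof.
split; first exact: liftable_inOP fam_cap_bond.
  move=> A SA n; apply: subset_trans (liftable_sub (@fam_cap_downset) fam_cap_bond n) _.
  by apply/subsetP => x; rewrite inE => /asboolP; apply.
move=> V V_OP VS; apply: liftable_greatest => // n; apply/subsetP => x xV.
by rewrite inE; apply/asboolP => A SA; apply: (subsetP (VS A SA n)).
Qed.

End Family.
End Limit.

Theorem mainTheorem16 (d : Order.disp_t) (P : nat -> finPOrderType d)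
  (p : forall m k : nat, P m -> P k) :
  inverse_system p ->
  forall S : (forall n, {set P n}) -> Prop,
    countable_family S ->
    (forall A, S A -> inOP p A) ->
    (exists U, is_sup_OP p S U) /\ (exists L, is_inf_OP p S L).
Proof.
move=> [_ p_quot p_comp] S _ S_OP.
have p_mono m k : (k < m)%N -> forall x y : P m, x <= y -> p m k x <= p m k y.
  by move=> km; case: (p_quot m k km).
split; first by exists (fam_cup S); apply: fam_cup_sup.
by exists (liftable p (fam_cap S)); apply: liftable_fam_cap_inf.
Qed.
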